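(* Let $M=(E,\mathcal{I})$ be a matroid, $\Delta$ a nonnegative integer, $w:E\to\{-\Delta,\dots,\Delta\}$ integer weights and $\mu\ge 0$. Let $A,B\in\mathcal{I}$ be disjoint with $|A|=|B|=k$ and $|w(A)-w(B)|\le\mu$. Then there are unicolor subsets $A'\subseteq A$ and $B'\subseteq B$ of equal cardinality such that (i) $(A\setminus A')\cup B'\in\mathcal{I}$, (ii) $|A'|=|B'|\ge (k-\mu)/(2\Delta+1)^4$, and (iii) $w(a)\ge w(b)$ for each $a\in A'$ and $b\in B'$.
   Context: $w(S)=\sum_{e\in S}w(e)$. A set $S\subseteq E$ is unicolor if $w(x)=w(y)$ for all $x,y\in S$. *)

From HB Require Import structures.
From mathcomp Require Import all_boot all_order all_algebra.
Set Implicit Arguments. Unset Strict Implicit. Unset Printing Implicit Defensive.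
Import Order.TTheory GRing.Theory Num.Theory.

Definition is_matroid (T : finType) (indep : {set T} -> bool) : Prop :=
  [/\ indep set0,
      (forall X Y : {set T}, Y \subset X -> indep X -> indep Y)
    & (forall X Y : {set T}, indep X -> indep Y -> #|X| < #|Y| ->
         exists2 y, y \in Y :\: X & indep (y |: X))].

Definition wset (T : finType) (w : T -> int) (S : {set T}) : int :=
  (\sum_(e in S) w e)%R.

Definition unicolor (T : finType) (w : T -> int) (S : {set T}) : Prop :=
  forall x y, x \in S -> y \in S -> w x = w y.

From HB Require Import structures.
From mathcomp Require Import all_boot all_order all_algebra zify lra.
Import Order.TTheory GRing.Theory Num.Theory.

Set Implicit Arguments.
Unset Strict Implicit.
Unset Printing Implicit Defensive.

(* Shift the weights to colours c = w + Delta in [0, N) with N = 2 Delta + 1.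
   Averaging over the thresholds y < N gives a y for which
   #{b in B | c b <= y} + #{a in A | y <= c a} exceeds k by at least
   (k - mu) / N.  Augmenting the part {a in A | c a < y} of A from
   {b in B | c b <= y} therefore adds that many elements of B of colour <= y;
   keep one colour class of them (pigeonhole), exchange it into A against
   elements of A, all of colour >= y, keep one colour class of those, and
   shrink the exchange to it by a last augmentation.  Each pigeonhole costs
   a factor N, so the argument even gives the bound (k - mu) / N ^ 3. *)

Lemma exists_sum_leq_mul (N : nat) (F : nat -> nat) :
  exists i, \sum_(j < N) F j <= N * F i.
Proof.
case: N => [|N]; first by exists 0; rewrite big_ord0.
have [|i0 max_i0] := @bigop.eq_bigmax _ (fun j : 'I_N.+1 => F j); first by rewrite card_ord.
exists i0; rewrite -max_i0 -[X in X * _](card_ord N.+1) -sum_nat_const.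
by apply: leq_sum => j _; apply: (bigop.leq_bigmax (F := fun k : 'I_N.+1 => F k)).
Qed.

Lemma card_set_sum (J : finType) (P : pred J) : #|[set x | P x]| = \sum_x P x.
Proof. by rewrite -sum1dep_card big_mkcond; apply: eq_bigr => x _; case: (P x). Qed.

Lemma sum_card_sep (I J : finType) (S : {set J}) (P : I -> pred J) :
  \sum_i #|[set e in S | P i e]| = \sum_(e in S) #|[set i | P i e]|.
Proof.
under eq_bigr do rewrite card_set_sum.
under [RHS]eq_bigr do rewrite card_set_sum.
rewrite exchange_big [RHS]big_mkcond; apply: eq_bigr => e _.
by case: (e \in S); last rewrite big1.
Qed.

Lemma card_ord_eq (N m : nat) : m < N -> #|[set y : 'I_N | m == y]| = 1.
Proof.
move=> lt_mN; rewrite -(cards1 (Ordinal lt_mN)); apply: eq_card => y.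
by rewrite !inE eq_sym -val_eqE.
Qed.

Lemma card_ord_geq (N m : nat) : #|[set y : 'I_N | m <= y]| = N - m.
Proof.
rewrite -sum1dep_card (eq_bigl (fun y : 'I_N => xpredT y && (m <= y))) //.
by rewrite -(big_geq_mkord m N xpredT (fun _ => 1)) sum_nat_const_nat muln1.
Qed.

Lemma card_ord_leq (N m : nat) : m < N -> #|[set y : 'I_N | y <= m]| = m.+1.
Proof.
move=> lt_mN; rewrite -sum1dep_card.
rewrite (eq_bigl (fun y : 'I_N => xpredT y && (y < m.+1))) //.
by rewrite -(big_ord_widen_cond N xpredT (fun _ => 1)) // sum1_card card_ord.
Qed.

Lemma sep_subset (T : finType) (S : {set T}) (P : pred T) : [set e in S | P e] \subset S.
Proof. by rewrite setIdE subsetIl. Qed.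

Lemma cardsU_disjoint (T : finType) (X Y : {set T}) :
  [disjoint X & Y] -> #|X :|: Y| = #|X| + #|Y|.
Proof. by move=> dXY; apply/eqP; rewrite (leq_card_setU X Y).2. Qed.

Section ColorCounting.

Variables (T : finType) (N : nat) (c : T -> nat).
Hypothesis c_lt : forall e, c e < N.

Lemma pigeonhole_color (S : {set T}) :
  exists z, #|S| <= N * #|[set e in S | c e == z]|.
Proof.
have [z le_z] := exists_sum_leq_mul N (fun z => #|[set e in S | c e == z]|).
exists z; apply: leq_trans le_z; rewrite eq_leq //.
rewrite (sum_card_sep S (fun (z : 'I_N) e => c e == z)) -sum1_card.
by apply: eq_bigr => e _; rewrite card_ord_eq.
Qed.

Lemma exists_threshold (A B : {set T}) :
  exists y, N * #|B| + \sum_(a in A) c a + #|A| <=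
    N * (#|[set b in B | c b <= y]| + #|[set a in A | y <= c a]|) + \sum_(b in B) c b.
Proof.
have [y le_y] := exists_sum_leq_mul N
  (fun y => #|[set b in B | c b <= y]| + #|[set a in A | y <= c a]|).
exists y; apply: leq_trans (leq_add le_y (leqnn _)); rewrite eq_leq //.
have sumB : \sum_(b in B) #|[set y : 'I_N | c b <= y]| + \sum_(b in B) c b = N * #|B|.
  rewrite -big_split /= (eq_bigr (fun _ => N)) => [|b _].
    by rewrite sum_nat_const mulnC.
  by rewrite card_ord_geq subnK // ltnW.
have sumA : \sum_(a in A) #|[set y : 'I_N | y <= c a]| = \sum_(a in A) c a + #|A|.
  rewrite -[#|A|]sum1_card -big_split; apply: eq_bigr => a _ /=.
  by rewrite (card_ord_leq (c_lt a)) addn1.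
rewrite big_split /= (sum_card_sep B (fun (y : 'I_N) b => c b <= y)).
rewrite (sum_card_sep A (fun (y : 'I_N) a => y <= c a)) sumA.
by rewrite [RHS]addnAC sumB addnA.
Qed.

End ColorCounting.

Section MatroidExchange.

Variables (T : finType) (indep : {set T} -> bool).
Hypothesis indep_matroid : is_matroid indep.

Lemma indep_subset (X Y : {set T}) : X \subset Y -> indep Y -> indep X.
Proof. by case: indep_matroid => _ sub _; apply: sub. Qed.

Lemma matroid_augment (X Y : {set T}) : indep X -> indep Y ->
  exists D : {set T}, [/\ D \subset Y :\: X, indep (X :|: D) & #|D| = #|Y| - #|X|].
Proof.
move: {2}(#|Y| - #|X|) (erefl (#|Y| - #|X|)) => n; elim: n X => [|n IHn] X dn iX iY.
  by exists set0; rewrite sub0set setU0 cards0.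
have [_ _ augment] := indep_matroid.
have [|y /setDP[yY yNX] iyX] := augment X Y iX iY; first by lia.
have [|D [sD iD cardD]] := IHn (y |: X) _ iyX iY; first by rewrite cardsU1 yNX; lia.
have yND : y \notin D by apply/negP => /(subsetP sD); rewrite !inE eqxx.
exists (y |: D); split.
- by rewrite subUset sub1set inE yY yNX (subset_trans sD) // setDS // subsetUr.
- by rewrite setUCA setUA.
- by rewrite cardsU1 yND cardD cardsU1 yNX; lia.
Qed.

Lemma exchange_avoiding (A C B' : {set T}) :
  indep A -> C \subset A -> [disjoint A & B'] -> indep (C :|: B') ->
  #|C| + #|B'| <= #|A| ->
  exists A1 : {set T}, [/\ A1 \subset A :\: C, #|A1| = #|B'| & indep ((A :\: A1) :|: B')].
Proof.
move=> iA sCA dAB iCB le_card.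
have [D [/subsetDP[sDA dD] iD cardD]] := matroid_augment iCB iA.
have dCD : [disjoint C & D] by rewrite disjoint_sym (disjointWr (subsetUl C B')).
have cardCB : #|C :|: B'| = #|C| + #|B'| by rewrite cardsU_disjoint // (disjointWl sCA).
have sCDA : C :|: D \subset A by rewrite subUset sCA.
have compl_CD : A :\: (A :\: (C :|: D)) = C :|: D.
  by rewrite setDDr setDv set0U; apply/setIidPr.
exists (A :\: (C :|: D)); split.
- exact: setDS (subsetUl _ _).
- by rewrite cardsDS // cardsU_disjoint // cardD cardCB; lia.
- by rewrite compl_CD setUAC.
Qed.

Lemma exchange_shrink (A A1 B1 A2 : {set T}) :
  indep A -> [disjoint A & B1] -> A2 \subset A1 -> A1 \subset A ->
  #|A1| = #|B1| -> indep ((A :\: A1) :|: B1) ->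
  exists B2 : {set T}, [/\ B2 \subset B1, #|B2| = #|A2| & indep ((A :\: A2) :|: B2)].
Proof.
move=> iA dAB sA21 sA1A cardA1 iZ.
have [D [sD iD cardD]] := matroid_augment (indep_subset (subsetDl A A2) iA) iZ.
exists D; split => //.
- apply/subsetP => e /(subsetP sD) /setDP[/setUP[/setDP[eA eNA1] | //]].
  by rewrite inE eA andbT negbK => /(subsetP sA21); rewrite (negbTE eNA1).
- have dA1B1 : [disjoint A :\: A1 & B1] by apply: disjointWl dAB; apply: subsetDl.
  have sA2A := subset_trans sA21 sA1A.
  rewrite cardD cardsU_disjoint // !cardsDS // cardA1.
  by have := subset_leq_card sA1A; have := subset_leq_card sA2A; lia.
Qed.

End MatroidExchange.

Section ColorExchange.

Variables (T : finType) (indep : {set T} -> bool) (N : nat) (c : T -> nat).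
Hypotheses (indep_matroid : is_matroid indep) (c_lt : forall e, c e < N).
Variables (A B : {set T}).
Hypotheses (iA : indep A) (iB : indep B) (dAB : [disjoint A & B]) (cardAB : #|A| = #|B|).

Lemma threshold_exchange y : exists A1 B1 : {set T},
  [/\ A1 \subset A, B1 \subset B, #|A1| = #|B1| & indep ((A :\: A1) :|: B1)] /\
  [/\ {in B1 &, forall b b', c b = c b'}, {in A1, forall a, y <= c a},
      {in B1, forall b, c b <= y}
    & #|[set b in B | c b <= y]| + #|[set a in A | y <= c a]| <= #|A| + N * #|B1|].
Proof.
set C := [set a in A | c a < y]; set Y := [set b in B | c b <= y].
have sCA : C \subset A := sep_subset _ _.
have sYB : Y \subset B := sep_subset _ _.
have cardC : #|C| + #|[set a in A | y <= c a]| = #|A|.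
  rewrite !card_set_sum -big_split -sum1_card [RHS]big_mkcond.
  by apply: eq_bigr => a _ /=; case: (a \in A); case: ltnP.
have [D [/subsetDP[sDY dDC] iCD cardD]] := matroid_augment indep_matroid
  (indep_subset indep_matroid sCA iA) (indep_subset indep_matroid sYB iB).
have [z le_z] := pigeonhole_color c_lt D.
set B1 := [set e in D | c e == z] in le_z *.
have sB1D : B1 \subset D := sep_subset _ _.
have sB1B : B1 \subset B := subset_trans sB1D (subset_trans sDY sYB).
have [|A1 [/subsetDP[sA1A dA1C] cardA1 iA1]] := exchange_avoiding indep_matroid iA sCA
  (disjointWr sB1B dAB) (indep_subset indep_matroid (setUS C sB1D) iCD).
- apply: leq_trans (leq_add (leqnn _) (subset_leq_card sB1D)) _.
  by rewrite cardD -maxnE geq_max -{1}cardC leq_addr cardAB subset_leq_card.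
exists A1, B1; split; split => //.
- by move=> b b'; rewrite !inE => /andP[_ /eqP->] /andP[_ /eqP->].
- move=> a a_A1; rewrite leqNgt; apply/negP => lt_ay.
  by have := disjointFr dA1C a_A1; rewrite inE (subsetP sA1A) ?lt_ay.
- by move=> b /(subsetP sB1D) /(subsetP sDY); rewrite inE => /andP[].
- rewrite -cardC addnAC leq_add2r.
  apply: leq_trans (leq_add (leqnn #|C|) le_z).
  by rewrite cardD -leq_subLR.
Qed.

Lemma color_exchange : exists A' B' : {set T},
  [/\ A' \subset A, B' \subset B, {in A' &, forall a a', c a = c a'},
      {in B' &, forall b b', c b = c b'} & #|A'| = #|B'|] /\
  [/\ indep ((A :\: A') :|: B'),
      #|A| + \sum_(a in A) c a <= N ^ 3 * #|A'| + \sum_(b in B) c b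
    & {in A' & B', forall a b, c b <= c a}].
Proof.
have [y le_sum_y] := exists_threshold c_lt A B.
have [A1 [B1 [[sA1A sB1B cardA1 iA1] [cB1 ge_y le_y le_card_y]]]] := threshold_exchange y.
have [x le_x] := pigeonhole_color c_lt A1.
set A2 := [set e in A1 | c e == x] in le_x *.
have sA21 : A2 \subset A1 := sep_subset _ _.
have [B2 [sB21 cardB2 iB2]] :=
  exchange_shrink indep_matroid iA (disjointWr sB1B dAB) sA21 sA1A cardA1 iA1.
exists A2, B2; split; split => //.
- exact: subset_trans sA21 sA1A.
- exact: subset_trans sB21 sB1B.
- by move=> a a'; rewrite !inE => /andP[_ /eqP->] /andP[_ /eqP->].
- by move=> b b' /(subsetP sB21) b_B1 /(subsetP sB21) b'_B1; apply: cB1.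
- have le_N_y := leq_mul (leqnn N) le_card_y; rewrite mulnDr in le_N_y.
  have le_N_x : N * (N * #|B1|) <= N * (N * (N * #|A2|)).
    by rewrite -cardA1 !leq_mul2l le_x !orbT.
  rewrite !expnS expn0 muln1 -!mulnA; rewrite -cardAB in le_sum_y.
  lia.
- move=> a b /(subsetP sA21) /ge_y le_ya /(subsetP sB21) /le_y le_by.
  exact: leq_trans le_by le_ya.
Qed.

End ColorExchange.

Local Open Scope ring_scope.

Lemma wset_shift (T : finType) (w : T -> int) (c : T -> nat) (D : int) (S : {set T}) :
  (forall e, (c e)%:Z = w e + D) -> wset w S = (\sum_(e in S) c e)%N%:Z - D *+ #|S|.
Proof.
move=> c_def; apply/eqP; rewrite eq_sym subr_eq -sumr_const /wset -big_split /=.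
by rewrite -natz natr_sum; apply/eqP/eq_bigr => e _; rewrite natz c_def.
Qed.

Theorem corollary9 (R : realFieldType) (T : finType) (indep : {set T} -> bool)
  (Delta : nat) (w : T -> int) (mu : R) (A B : {set T}) (k : nat) :
  is_matroid indep ->
  (forall e, `|w e| <= Delta%:Z) ->
  0 <= mu ->
  indep A -> indep B -> [disjoint A & B] ->
  #|A| = k -> #|B| = k ->
  (`|wset w A - wset w B|%:~R <= mu) ->
  exists A' B' : {set T},
    [/\ A' \subset A, B' \subset B, unicolor w A', unicolor w B'
      & #|A'| = #|B'|] /\
    [/\ indep ((A :\: A') :|: B'),
        (k%:R - mu) / ((2 * Delta + 1) ^ 4)%N%:R <= #|A'|%:R
      & forall a b, a \in A' -> b \in B' -> w b <= w a].
Proof.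
move=> matroid w_le _ iA iB dAB cardA cardB le_mu.
set N := (2 * Delta + 1)%N.
have N_gt0 : (0 < N)%N by rewrite /N addn1.
pose c e := absz (w e + Delta%:Z).
have c_def e : (c e)%:Z = w e + Delta%:Z by have := w_le e; rewrite /c; lia.
have c_lt e : (c e < N)%N by have := w_le e; have := c_def e; rewrite /N; lia.
have [A' [B' [[sA sB cA cB card'] [iA' le_card le_c]]]] :=
  color_exchange matroid c_lt iA iB dAB (etrans cardA (esym cardB)).
exists A', B'; split; split => //.
- by move=> x y xA yA; apply: (addIr Delta%:Z); rewrite -!c_def (cA x y).
- by move=> x y xB yB; apply: (addIr Delta%:Z); rewrite -!c_def (cB x y).
- have le_N34 : (N ^ 3 * #|A'| <= N ^ 4 * #|A'|)%N.
    by rewrite leq_mul2r expnS leq_pmull ?orbT.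
  have le_int : k%:Z - `|wset w A - wset w B| <= (N ^ 4 * #|A'|)%N%:Z.
    rewrite !(wset_shift _ c_def) cardA cardB; rewrite cardA in le_card; lia.
  have le_R : k%:R - `|wset w A - wset w B|%:~R <= (N ^ 4 * #|A'|)%N%:R :> R.
    by move: le_int; rewrite -(ler_int R) rmorphB.
  rewrite ler_pdivrMr ?ltr0n ?expn_gt0 ?N_gt0 // -natrM mulnC; lra.
- by move=> a b aA' bB'; rewrite -(lerD2r Delta%:Z) -!c_def lez_nat le_c.
Qed.
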